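(* For every $\theta\in V_\Lambda$, the classes $\mathcal P(\theta)$ and $\overline{\mathcal P}(\theta)$ are pseudo-torsion classes in $\mathcal G$. Moreover, each of them is closed under arbitrary extensions in $\mathrm{mod}\text-\Lambda$ (if $0\to A\to B\to C\to 0$ is exact with $A,C$ in the class then $B$ is in the class); in particular they are closed under direct sums.
   Context: Let $\Lambda$ be a finite dimensional algebra over a field with $n$ isoclasses of simple modules, and $\mathrm{mod}\text-\Lambda$ the category of finitely generated right $\Lambda$-modules. Fix a torsion class $\mathcal G\subseteq\mathrm{mod}\text-\Lambda$ (closed under isomorphisms, extensions and quotients). For $B\in\mathcal G$, a subobject of $B$ is a submodule in $\mathcal G$; a subobject $A\subseteq B$ is strict if $A\cap B'\in\mathcal G$ for every subobject $B'$ of $B$; a strict quotient of $B$ is $B/A$ with $A$ a strict subobject. A short exact sequence $0\to A\to B\to C\to 0$ in $\mathcal G$ is strict exact if $A$ is a strict subobject of $B$. A pseudo-torsion class is a nonempty class $\mathcal P\subseteq\mathcal G$ closed under strict quotients and strict extensions. Let $K_0\Lambda\cong\mathbb Z^n$ and $V_\Lambda=\mathrm{Hom}_{\mathbb Z}(K_0\Lambda,\mathbb R)\cong\mathbb R^n$; for $\theta\in V_\Lambda$ and a module $M$, $\theta(M)$ denotes $\theta$ applied to the dimension vector (composition-factor multiplicities) of $M$. Define $\mathcal P(\theta)$ as the class consisting of $0$ and all nonzero $M\in\mathcal G$ with $\theta(M'')>0$ for every nonzero strict quotient $M''$ of $M$ (including $M''=M$); and $\overline{\mathcal P}(\theta)$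 as the class of $M\in\mathcal G$ with $\theta(M'')\ge 0$ for every strict quotient $M''$ of $M$. *)

From HB Require Import structures.
From mathcomp Require Import all_boot all_order all_algebra.
From mathcomp Require Import falgebra.
From mathcomp Require Import reals.
Set Implicit Arguments. Unset Strict Implicit. Unset Printing Implicit Defensive.
Import Order.TTheory GRing.Theory Num.Theory.
Local Open Scope ring_scope.

(* A finitely generated right L-module is (up to isomorphism) a finite
   dimensional F-space F^d (row vectors) with a right action
   v . a := v *m fact a, where fact is a unital F-algebra morphism
   L -> 'M_d (row vectors give right modules: fact (a*b) = fact a *m fact b). *)
Record fmod (F : fieldType) (L : falgType F) := FMod {
  fdim : nat;
  fact : L -> 'M[F]_fdim;
  fact_lin : forall (k : F) (a b : L), fact (k *: a + b) = k *: fact a + fact b;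
  fact_one : fact 1 = 1%:M;
  fact_mul : forall a b : L, fact (a * b) = fact a *m fact b
}.

Section Modules.
Variables (F : fieldType) (L : falgType F).
Local Notation mod := (fmod L).

Definition is_hom (M N : mod) (f : 'M[F]_(fdim M, fdim N)) : Prop :=
  forall a : L, fact M a *m f = f *m fact N a.

Definition ses (A B C : mod) (f : 'M[F]_(fdim A, fdim B))
  (g : 'M[F]_(fdim B, fdim C)) : Prop :=
  [/\ is_hom f, is_hom g, row_free f, row_full g & (f == kermx g)%MS].

Definition isomorphic (M N : mod) : Prop :=
  exists f : 'M[F]_(fdim M, fdim N), [/\ is_hom f, row_free f & row_full f].

Definition sub_in (C : mod -> Prop) (B : mod) m (U : 'M[F]_(m, fdim B)) : Prop :=
  exists (M : mod) (f : 'M[F]_(fdim M, fdim B)),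
    [/\ is_hom f, row_free f, (f == U)%MS & C M].

Definition is_quot (B Q : mod) m (U : 'M[F]_(m, fdim B))
  (g : 'M[F]_(fdim B, fdim Q)) : Prop :=
  [/\ is_hom g, row_full g & (kermx g == U)%MS].

Section Torsion.
Variable G : mod -> Prop.

Definition torsion_class : Prop :=
  [/\ (exists M, G M),
      (forall M N, isomorphic M N -> G M -> G N),
      (forall A B C f g, @ses A B C f g -> G A -> G C -> G B) &
      (forall (B Q : mod) (g : 'M[F]_(fdim B, fdim Q)),
          is_hom g -> row_full g -> G B -> G Q)].

Definition subobj (B : mod) m (U : 'M[F]_(m, fdim B)) : Prop := sub_in G U.

Definition strict_subobj (B : mod) m (U : 'M[F]_(m, fdim B)) : Prop :=
  subobj U /\
  forall m' (U' : 'M[F]_(m', fdim B)), subobj U' -> subobj (U :&: U')%MS.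

Definition strict_quot (B Q : mod) : Prop :=
  exists m (U : 'M[F]_(m, fdim B)) (g : 'M[F]_(fdim B, fdim Q)),
    strict_subobj U /\ is_quot U g.

Definition strict_ses (A B C : mod) f g : Prop :=
  [/\ @ses A B C f g, G A, G B, G C & strict_subobj f].

Definition pseudo_torsion (P : mod -> Prop) : Prop :=
  [/\ (exists M, P M),
      (forall M, P M -> G M),
      (forall M Q, P M -> strict_quot M Q -> P Q) &
      (forall A B C f g, @strict_ses A B C f g -> P A -> P C -> P B)].

Section Theta.
Variables (R : realType) (theta : mod -> R).

(* elements of V_L = Hom(K_0 L, R): additive functions on short exact sequences *)
Definition additive_fun : Prop :=
  forall A B C f g, @ses A B C f g -> theta B = theta A + theta C.

Definition Pth (M : mod) : Prop :=
  G M /\ forall Q, strict_quot M Q -> (0 < fdim Q)%N -> 0 < theta Q.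

Definition Pbar (M : mod) : Prop :=
  G M /\ forall Q, strict_quot M Q -> 0 <= theta Q.
End Theta.
End Torsion.

Definition ext_closed (P : mod -> Prop) : Prop :=
  forall A B C f g, @ses A B C f g -> P A -> P C -> P B.

Definition is_dsum (A C B : mod) : Prop :=
  exists (i1 : 'M[F]_(fdim A, fdim B)) (i2 : 'M[F]_(fdim C, fdim B))
         (p1 : 'M[F]_(fdim B, fdim A)) (p2 : 'M[F]_(fdim B, fdim C)),
    [/\ is_hom i1, is_hom i2, is_hom p1 & is_hom p2] /\
    [/\ i1 *m p1 = 1%:M, i2 *m p2 = 1%:M &
        p1 *m i1 + p2 *m i2 = 1%:M].

Definition dsum_closed (P : mod -> Prop) : Prop :=
  forall A C B, is_dsum A C B -> P A -> P C -> P B.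

End Modules.

(* Let 0 -> A -> B -> C -> 0 be exact with A and C in P(theta) (resp. in
   Pbar(theta)) and let B/U be a strict quotient of B.  The image I of A in B/U
   is the strict quotient A/f^-1(U) of A, and (B/U)/I is the strict quotient
   C/g(U) of C; additivity of theta on 0 -> I -> B/U -> (B/U)/I -> 0 then
   carries positivity (resp. nonnegativity) of theta from I and (B/U)/I to B/U.  Strictness of f^-1(U) and
   g(U) comes from the closure of subobjects in G under extensions, and a strict
   quotient of a strict quotient is again one, which gives closure under strict
   quotients.  Direct sums are split extensions. *)

From mathcomp Require Import all_boot all_order all_algebra falgebra reals.
Set Implicit Arguments. Unset Strict Implicit. Unset Printing Implicit Defensive.
Import Order.TTheory GRing.Theory Num.Theory.
Local Open Scope ring_scope.

Section MatrixFacts.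
Variable F : fieldType.

Lemma row_fullMl m n p (A : 'M[F]_(m, n)) (B : 'M_(n, p)) :
  row_full A -> row_full (A *m B) = row_full B.
Proof. by move=> fA; apply: eq_row_full; apply: eqmxMfull. Qed.

Lemma row_freeMfree m n p (A : 'M[F]_(m, n)) (B : 'M_(n, p)) :
  row_free B -> row_free (A *m B) = row_free A.
Proof. by move=> fB; rewrite /row_free mxrankMfree. Qed.

Lemma kermxMfree m n p (A : 'M[F]_(m, n)) (B : 'M_(n, p)) :
  row_free B -> (kermx (A *m B) :=: kermx A)%MS.
Proof.
move=> fB; apply/eqmxP; apply/andP; split; apply/sub_kermxP.
  by apply/eqP; rewrite -(mulmx_free_eq0 _ fB) -mulmxA mulmx_ker.
by rewrite mulmxA mulmx_ker mul0mx.
Qed.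

Lemma kermx_cokermx m n (U : 'M[F]_(m, n)) : (kermx (cokermx U) :=: U)%MS.
Proof.
apply/eqmx_sym/eqmxP; rewrite -(geq_leqif (mxrank_leqif_eq _)).
  by rewrite mxrank_ker mxrank_coker subKn ?rank_leq_col.
by apply/sub_kermxP; apply: mulmx_coker.
Qed.

Lemma kermx_col_base_coker m n (U : 'M[F]_(m, n)) :
  (kermx (col_base (cokermx U)) :=: U)%MS.
Proof.
apply: eqmx_trans (kermx_cokermx U); apply: eqmx_sym.
have := kermxMfree (col_base (cokermx U)) (row_base_free (cokermx U)).
by rewrite mulmx_base.
Qed.

Lemma capmx_kermxM m n p k (X : 'M[F]_(m, n)) (f : 'M_(n, p)) (g : 'M_(p, k)) :
  ((kermx (f *m g) :&: X) *m f :=: kermx g :&: X *m f)%MS.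
Proof.
apply/eqmxP; apply/andP; split.
  rewrite sub_capmx submxMr ?capmxSr // andbT; apply/sub_kermxP.
  by rewrite -mulmxA; apply/sub_kermxP/capmxSl.
have [D eD] := submxP (capmxSr (kermx g) (X *m f)).
have /sub_kermxP := capmxSl (kermx g) (X *m f); rewrite eD => Dg0.
rewrite mulmxA; apply: submxMr; rewrite sub_capmx submxMl andbT.
by apply/sub_kermxP; rewrite mulmxA -Dg0 -!mulmxA.
Qed.

Lemma kermxM_image m n p (f : 'M[F]_(m, n)) (g : 'M_(n, p)) :
  (kermx (f *m g) *m f :=: kermx g :&: f)%MS.
Proof.
have full1 : row_full (1%:M : 'M[F]_m) by rewrite row_full_unit unitmx1.
apply: eqmx_trans (eqmxMr f (eqmx_sym (capmxT _ full1))) _.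
by rewrite -[X in (_ :=: _ :&: X)%MS]mul1mx; apply: capmx_kermxM.
Qed.

Lemma kermxM_full m n p k (A : 'M[F]_(m, n)) (B : 'M_(n, p)) (V : 'M_(k, m)) :
  row_full A -> (kermx B :=: V *m A)%MS -> (kermx (A *m B) :=: kermx A + V)%MS.
Proof.
move=> fA kB; apply/eqmxP; apply/andP; split.
  apply/rV_subP=> x /sub_kermxP; rewrite mulmxA => /sub_kermxP.
  rewrite kB => /submxP[y exA].
  rewrite -[x](subrK (y *m V)) addmx_sub_adds ?submxMl //.
  by apply/sub_kermxP; rewrite mulmxBl -mulmxA -exA subrr.
rewrite addsmx_sub; apply/andP; split; apply/sub_kermxP.
  by rewrite mulmxA mulmx_ker mul0mx.
by rewrite mulmxA; apply/sub_kermxP; rewrite kB.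
Qed.

Lemma mulmxKpinv_ker m n p (g : 'M[F]_(m, n)) (q : 'M_(m, p)) :
  row_full g -> (kermx g <= kermx q)%MS -> g *m (pinvmx g *m q) = q.
Proof.
move=> fg gq; apply/eqP; rewrite mulmxA -subr_eq0 -{2}[q]mul1mx -mulmxBl.
apply/eqP/sub_kermxP; apply: submx_trans gq; apply/sub_kermxP.
by rewrite mulmxBl -mulmxA mulVpmx // mulmx1 mul1mx subrr.
Qed.

Lemma kermx_factor_epi m n p (g : 'M[F]_(m, n)) (q : 'M_(m, p)) (psi : 'M_(n, p)) :
  row_full g -> g *m psi = q -> (kermx psi :=: kermx q *m g)%MS.
Proof.
move=> fg gpsi; apply/eqmxP; apply/andP; split.
  apply/rV_subP=> x /sub_kermxP x0.
  have ex : x = x *m pinvmx g *m g by rewrite -mulmxA mulVpmx // mulmx1.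
  by rewrite ex submxMr //; apply/sub_kermxP; rewrite -gpsi mulmxA -ex.
by apply/sub_kermxP; rewrite -mulmxA gpsi mulmx_ker.
Qed.

End MatrixFacts.

Section Modules.
Variables (F : fieldType) (L : falgType F).
Local Notation mod := (fmod L).

Definition is_submod (B : mod) m (U : 'M[F]_(m, fdim B)) : Prop :=
  forall a, stablemx U (fact B a).

Lemma is_submod_eqmx (B : mod) m1 m2 (U : 'M_(m1, fdim B)) (V : 'M_(m2, fdim B)) :
  (U :=: V)%MS -> is_submod U -> is_submod V.
Proof. by move=> eUV sU a; rewrite -(eqmx_stable _ eUV). Qed.

Lemma is_submod_hom (M B : mod) (f : 'M_(fdim M, fdim B)) : is_hom f -> is_submod f.
Proof. by move=> hf a; rewrite -hf submxMl. Qed.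

Lemma is_submod_ker (B C : mod) (g : 'M_(fdim B, fdim C)) :
  is_hom g -> is_submod (kermx g).
Proof. by move=> hg a; apply/sub_kermxP; rewrite -mulmxA hg mulmxA mulmx_ker mul0mx. Qed.

Lemma is_submod_cap (B : mod) m1 m2 (U : 'M_(m1, fdim B)) (V : 'M_(m2, fdim B)) :
  is_submod U -> is_submod V -> is_submod (U :&: V)%MS.
Proof.
move=> sU sV a; rewrite sub_capmx.
by rewrite (submx_trans _ (sU a)) ?(submx_trans _ (sV a)) ?submxMr ?capmxSl ?capmxSr.
Qed.

Lemma is_submod_preimage (B C : mod) (g : 'M_(fdim B, fdim C)) m (V : 'M_(m, fdim C)) :
  is_hom g -> is_submod V -> is_submod (kermx (g *m cokermx V)).
Proof.
move=> hg sV a; apply/sub_kermxP; rewrite mulmxA -(mulmxA _ _ g) hg mulmxA.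
have : (kermx (g *m cokermx V) *m g <= V)%MS by rewrite submxE -mulmxA mulmx_ker.
by move/(submxMr (fact C a))/submx_trans/(_ (sV a)); rewrite submxE -mulmxA => /eqP.
Qed.

Lemma hom_comp (A B C : mod) (f : 'M_(fdim A, fdim B)) (g : 'M_(fdim B, fdim C)) :
  is_hom f -> is_hom g -> is_hom (f *m g).
Proof. by move=> hf hg a; rewrite mulmxA hf -mulmxA hg mulmxA. Qed.

Lemma hom_factor_mono (N M B : mod) (e : 'M_(fdim N, fdim B)) (f : 'M_(fdim M, fdim B)) :
  is_hom e -> is_hom f -> row_free f -> (e <= f)%MS -> is_hom (e *m pinvmx f).
Proof.
move=> he hf ff ef a; apply: (row_free_inj ff).
by rewrite -mulmxA mulmxKpV // he -mulmxA hf mulmxA mulmxKpV.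
Qed.

Lemma hom_factor_epi (B C D : mod) (g : 'M_(fdim B, fdim C)) (q : 'M_(fdim B, fdim D)) :
  is_hom g -> row_full g -> is_hom q -> (kermx g <= kermx q)%MS ->
  is_hom (pinvmx g *m q).
Proof.
move=> hg fg hq gq a; apply: (row_full_inj fg).
by rewrite mulmxA -hg -mulmxA (mulmxKpinv_ker fg gq) hq mulmxA (mulmxKpinv_ker fg gq).
Qed.

Section Submodule.
Variables (B : mod) (m : nat) (U : 'M[F]_(m, fdim B)) (sU : is_submod U).

Definition submod_act (a : L) := conjmx (row_base U) (fact B a).

Lemma submod_act_lin k a b : submod_act (k *: a + b) = k *: submod_act a + submod_act b.
Proof. by rewrite /submod_act /conjmx fact_lin mulmxDr mulmxDl -scalemxAr -scalemxAl. Qed.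

Lemma submod_act_one : submod_act 1 = 1%:M.
Proof. by rewrite /submod_act fact_one conjmx_scalar ?row_base_free. Qed.

Lemma submod_act_mul a b : submod_act (a * b) = submod_act a *m submod_act b.
Proof. by rewrite /submod_act fact_mul conjmxM // inE stablemx_row_base. Qed.

Definition submod : mod := FMod submod_act_lin submod_act_one submod_act_mul.

Lemma submod_incl_hom : is_hom (row_base U : 'M_(fdim submod, fdim B)).
Proof. by move=> a; rewrite /= /submod_act /conjmx mulmxKpV ?stablemx_row_base. Qed.

End Submodule.

Section Quotient.
Variables (B : mod) (k : nat) (g : 'M[F]_(fdim B, k)).
Hypotheses (fg : row_full g) (sK : is_submod (kermx g)).

Definition quotmod_act (a : L) := pinvmx g *m (fact B a *m g).

Lemma quotmod_actE a : g *m quotmod_act a = fact B a *m g.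
Proof. by apply: mulmxKpinv_ker fg _; apply/sub_kermxP; rewrite mulmxA; apply/sub_kermxP/sK. Qed.

Lemma quotmod_act_lin c a b : quotmod_act (c *: a + b) = c *: quotmod_act a + quotmod_act b.
Proof. by rewrite /quotmod_act fact_lin mulmxDl mulmxDr -scalemxAl -scalemxAr. Qed.

Lemma quotmod_act_one : quotmod_act 1 = 1%:M.
Proof. by rewrite /quotmod_act fact_one mul1mx mulVpmx. Qed.

Lemma quotmod_act_mul a b : quotmod_act (a * b) = quotmod_act a *m quotmod_act b.
Proof.
rewrite {1}/quotmod_act fact_mul -mulmxA -quotmod_actE !mulmxA.
by congr (_ *m _); rewrite /quotmod_act mulmxA.
Qed.

Definition quotmod : mod := FMod quotmod_act_lin quotmod_act_one quotmod_act_mul.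

Lemma quotmod_proj_hom : is_hom (g : 'M_(fdim B, fdim quotmod)).
Proof. by move=> a; rewrite /= quotmod_actE. Qed.

End Quotient.

Section Cokernel.
Variables (B : mod) (m : nat) (U : 'M[F]_(m, fdim B)) (sU : is_submod U).

Definition coker_proj := col_base (cokermx U).

Lemma kermx_coker_proj : (kermx coker_proj :=: U)%MS.
Proof. exact: kermx_col_base_coker. Qed.

Lemma mulmx_coker_proj : U *m coker_proj = 0.
Proof. by apply/sub_kermxP; rewrite kermx_coker_proj. Qed.

Definition cokermod : mod :=
  quotmod (col_base_full (cokermx U)) (is_submod_eqmx (eqmx_sym kermx_coker_proj) sU).

Lemma coker_proj_hom : is_hom (coker_proj : 'M_(fdim B, fdim cokermod)).
Proof. exact: quotmod_proj_hom. Qed.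

Lemma cokermod_ses (N : mod) (i : 'M_(fdim N, fdim B)) :
  is_hom i -> row_free i -> (i :=: U)%MS ->
  ses i (coker_proj : 'M_(fdim B, fdim cokermod)).
Proof.
move=> hi fi iU; split=> //.
- exact: coker_proj_hom.
- exact: col_base_full.
- exact/eqmxP/(eqmx_trans iU (eqmx_sym kermx_coker_proj)).
Qed.

End Cokernel.

Section Coimage.
Variables (M Q : mod) (phi : 'M[F]_(fdim M, fdim Q)) (hphi : is_hom phi).

Definition coimage : mod := cokermod (is_submod_ker hphi).

Definition coimage_incl : 'M_(fdim coimage, fdim Q) :=
  pinvmx (coker_proj (kermx phi)) *m phi.

Let ker_proj : (kermx (coker_proj (kermx phi)) <= kermx phi)%MS.
Proof. by rewrite kermx_coker_proj. Qed.

Lemma coimage_inclE : coker_proj (kermx phi) *m coimage_incl = phi.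
Proof. exact: mulmxKpinv_ker (col_base_full _) ker_proj. Qed.

Lemma coimage_incl_hom : is_hom coimage_incl.
Proof. exact: hom_factor_epi (coker_proj_hom _) (col_base_full _) hphi ker_proj. Qed.

Lemma coimage_incl_free : row_free coimage_incl.
Proof.
rewrite -kermx_eq0 (eqmx_eq0 (kermx_factor_epi (col_base_full _) coimage_inclE)).
by rewrite mulmx_coker_proj.
Qed.

Lemma coimage_incl_eqmx : (coimage_incl :=: phi)%MS.
Proof.
apply: eqmx_sym; have := eqmxMfull coimage_incl (col_base_full (cokermx (kermx phi))).
by rewrite coimage_inclE.
Qed.

End Coimage.

Lemma ses_fdim (A B C : mod) f g : @ses F L A B C f g -> fdim B = (fdim A + fdim C)%N.
Proof.
case=> _ _ /eqP ff /eqP fg /eqmx_rank.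
rewrite mxrank_ker fg ff => ->.
by rewrite subnK // -fg rank_leq_row.
Qed.

Definition zero_act (a : L) : 'M[F]_0 := 0.

Lemma zero_act_lin k a b : zero_act (k *: a + b) = k *: zero_act a + zero_act b.
Proof. by rewrite /zero_act scaler0 addr0. Qed.

Lemma zero_act_one : zero_act 1 = 1%:M.
Proof. by rewrite /zero_act (thinmx0 1%:M). Qed.

Lemma zero_act_mul a b : zero_act (a * b) = zero_act a *m zero_act b.
Proof. by rewrite /zero_act mul0mx. Qed.

Definition zero_mod : mod := FMod zero_act_lin zero_act_one zero_act_mul.

Lemma dsum_ses (A C B : mod) : is_dsum A C B -> exists f g, @ses F L A B C f g.
Proof.
move=> [i1 [i2 [p1 [p2 [[h1 h2 h3 h4] [i1p1 i2p2 pi]]]]]].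
have i1p2 : i1 *m p2 = 0.
  have twice : i1 *m p2 = i1 *m p2 + i1 *m p2.
    rewrite -{1}[i1]mulmx1 -pi mulmxDr mulmxDl !mulmxA i1p1 mul1mx.
    by rewrite -(mulmxA _ i2) i2p2 mulmx1.
  by apply: (addrI (i1 *m p2)); rewrite addr0 -twice.
exists i1, p2; split=> //; first by apply/row_freeP; exists p1.
  by apply/row_fullP; exists i2.
apply/andP; split; first exact/sub_kermxP.
apply/submxP; exists (kermx p2 *m p1).
by rewrite -{1}[kermx p2]mulmx1 -pi mulmxDr !mulmxA mulmx_ker mul0mx addr0.
Qed.

Lemma ext_closed_dsum_closed (P : mod -> Prop) : ext_closed P -> dsum_closed P.
Proof. by move=> extP A C B /dsum_ses[f [g s]]; exact: extP s. Qed.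

Section TorsionClass.
Variables (G : mod -> Prop) (tG : torsion_class G).

Lemma torsion_iso M N : isomorphic M N -> G M -> G N.
Proof. by case: tG => _ isoG _ _; apply: isoG. Qed.

Lemma torsion_ext A B C f g : @ses F L A B C f g -> G A -> G C -> G B.
Proof. by case: tG => _ _ extG _; apply: extG. Qed.

Lemma torsion_quot (B Q : mod) (g : 'M_(fdim B, fdim Q)) :
  is_hom g -> row_full g -> G B -> G Q.
Proof. by case: tG => _ _ _; apply. Qed.

Lemma torsion_zero : G zero_mod.
Proof.
case: tG => [[M GM] _ _ _]; apply: (torsion_quot (g := 0)) GM.
  by move=> a; rewrite !thinmx0.
by rewrite /row_full mxrank0.
Qed.

Lemma sub_in_eqmx (B : mod) m1 m2 (U : 'M_(m1, fdim B)) (V : 'M_(m2, fdim B)) :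
  sub_in G U -> (U :=: V)%MS -> sub_in G V.
Proof.
move=> [M [f [hf ff /eqmxP fU GM]]] UV; exists M, f; split=> //.
exact/eqmxP/(eqmx_trans fU UV).
Qed.

Lemma sub_in_is_submod (B : mod) m (U : 'M_(m, fdim B)) : sub_in G U -> is_submod U.
Proof. by move=> [M [f [hf _ /eqmxP fU _]]]; apply: is_submod_eqmx fU (is_submod_hom hf). Qed.

Lemma sub_in_torsion (N B : mod) m (U : 'M_(m, fdim B)) (i : 'M_(fdim N, fdim B)) :
  is_hom i -> row_free i -> (i :=: U)%MS -> sub_in G U -> G N.
Proof.
move=> hi fi iU [M [f [hf ff /eqmxP fU GM]]]; apply: torsion_iso GM.
have fi' : (f <= i)%MS by rewrite fU -iU.
have fPi : f *m pinvmx i *m i = f := mulmxKpV fi'.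
exists (f *m pinvmx i); split; first exact: hom_factor_mono.
  by rewrite -(row_freeMfree _ fi) fPi.
by rewrite /row_full -(mxrankMfree _ fi) fPi fU -iU.
Qed.

Lemma sub_in_image (M Q : mod) (phi : 'M_(fdim M, fdim Q)) :
  is_hom phi -> G M -> sub_in G phi.
Proof.
move=> hphi GM; exists (coimage hphi), (coimage_incl hphi); split.
- exact: coimage_incl_hom.
- exact: coimage_incl_free.
- exact/eqmxP/coimage_incl_eqmx.
- exact: torsion_quot (coker_proj_hom _) (col_base_full _) GM.
Qed.

Lemma sub_in_mul (B C : mod) m (U : 'M_(m, fdim B)) (g : 'M_(fdim B, fdim C)) :
  sub_in G U -> is_hom g -> sub_in G (U *m g).
Proof.
move=> [N [e [he _ /eqmxP eU GN]]] hg.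
exact: sub_in_eqmx (sub_in_image (hom_comp he hg) GN) (eqmxMr g eU).
Qed.

Lemma sub_in_pullback (A B : mod) m (K : 'M_(m, fdim A)) (f : 'M_(fdim A, fdim B)) :
  is_hom f -> row_free f -> sub_in G (K *m f) -> sub_in G K.
Proof.
move=> hf ff [N [e [he fe /eqmxP eK GN]]].
have ef : (e <= f)%MS by rewrite eK submxMl.
have ePf : e *m pinvmx f *m f = e := mulmxKpV ef.
exists N, (e *m pinvmx f); split=> //; first exact: hom_factor_mono.
  by rewrite -(row_freeMfree _ ff) ePf.
by apply/eqmxP; apply: (eqmxMfree ff); rewrite ePf.
Qed.

Lemma sub_in_ext (M Q : mod) (g : 'M_(fdim M, fdim Q)) k (T : 'M_(k, fdim M)) :
  is_hom g -> is_submod T -> sub_in G (T :&: kermx g)%MS -> sub_in G (T *m g) ->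
  sub_in G T.
Proof.
move=> hg sT GTker GTg.
have hX := submod_incl_hom sT.
have hXg := hom_comp hX hg; pose sK := is_submod_ker hXg.
have GK : G (submod sK).
  apply: sub_in_torsion (submod_incl_hom sK) (row_base_free _) (eq_row_base _) _.
  apply: sub_in_pullback hX (row_base_free T) _; apply: sub_in_eqmx GTker _.
  apply: eqmx_sym; apply: eqmx_trans (kermxM_image _ _) _.
  by rewrite capmxC; apply: cap_eqmx (eq_row_base T) (eqmx_refl _).
have GI : G (coimage hXg).
  apply: sub_in_torsion (coimage_incl_hom hXg) (coimage_incl_free hXg) _ _.
    exact: coimage_incl_eqmx.
  exact: sub_in_eqmx GTg (eqmx_sym (eqmxMr g (eq_row_base T))).
have sesK := cokermod_ses sK (submod_incl_hom sK) (row_base_free _) (eq_row_base _).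
exists (submod sT), (row_base T); split.
- exact: submod_incl_hom.
- exact: row_base_free.
- exact/eqmxP/eq_row_base.
- exact: torsion_ext sesK GK GI.
Qed.

Lemma strict_quot_cokermod (B : mod) m (U : 'M_(m, fdim B)) (sU : is_submod U) :
  strict_subobj G U -> strict_quot G B (cokermod sU).
Proof.
move=> strU; exists m, U, (coker_proj U); split=> //; split.
- exact: coker_proj_hom.
- exact: col_base_full.
- exact/eqmxP/kermx_coker_proj.
Qed.

Lemma strict_subobj_pullback (A B Q : mod) (f : 'M_(fdim A, fdim B))
    (q : 'M_(fdim B, fdim Q)) m (U : 'M_(m, fdim B)) :
  G A -> is_hom f -> row_free f -> (kermx q :=: U)%MS -> strict_subobj G U ->
  strict_subobj G (kermx (f *m q)).
Proof.
move=> GA hf ff kerq [_ strU].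
have capG m' (A' : 'M_(m', fdim A)) :
    sub_in G A' -> sub_in G (kermx (f *m q) :&: A')%MS.
  move=> GA'; apply: (sub_in_pullback hf ff).
  apply: sub_in_eqmx (strU _ _ (sub_in_mul GA' hf)) _.
  apply: eqmx_sym; apply: eqmx_trans (capmx_kermxM _ _ _) _.
  exact: cap_eqmx kerq (eqmx_refl _).
split=> //; apply: (sub_in_pullback hf ff); apply: sub_in_eqmx (strU _ f _) _.
  by exists A, f; split=> //; apply/eqmxP.
apply: eqmx_sym; apply: eqmx_trans (kermxM_image _ _) _.
exact: cap_eqmx kerq (eqmx_refl _).
Qed.

Lemma strict_subobj_image (B C : mod) (g : 'M_(fdim B, fdim C)) m (U : 'M_(m, fdim B)) :
  is_hom g -> row_full g -> sub_in G (kermx g) -> strict_subobj G U ->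
  strict_subobj G (U *m g).
Proof.
move=> hg fg Gker [GU strU]; split=> [|m' C' GC']; first exact: sub_in_mul GU hg.
pose P := kermx (g *m cokermx C').
have PC' : (P *m g :=: C')%MS.
  apply: eqmx_trans (kermxM_image _ _) _; apply: eqmx_trans (capmxT _ fg).
  exact: cap_eqmx (kermx_cokermx C') (eqmx_refl _).
have GP : sub_in G P.
  apply: (sub_in_ext hg (is_submod_preimage hg (sub_in_is_submod GC'))).
    apply: sub_in_eqmx Gker _; apply/eqmx_sym/capmx_idPr.
    by apply/sub_kermxP; rewrite mulmxA mulmx_ker mul0mx.
  exact: sub_in_eqmx GC' (eqmx_sym PC').
apply: sub_in_eqmx (sub_in_mul (strU _ _ GP) hg) _.
rewrite capmxC; apply: eqmx_trans (capmx_kermxM _ _ _) _; rewrite capmxC.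
exact: cap_eqmx (eqmx_refl _) (kermx_cokermx C').
Qed.

Lemma strict_quot_trans (M Q Q' : mod) :
  strict_quot G M Q -> strict_quot G Q Q' -> strict_quot G M Q'.
Proof.
move=> [m [U [g [[GU strU] [hg fullg /eqmxP kerg]]]]].
move=> [m' [V [h [[GV strV] [hh fullh /eqmxP kerh]]]]].
have hgh := hom_comp hg hh; pose W := kermx (g *m h).
have WkerU : (W :&: kermx g :=: U)%MS.
  apply: eqmx_trans kerg; apply/capmx_idPr.
  by apply/sub_kermxP; rewrite mulmxA mulmx_ker mul0mx.
exists _, W, (g *m h); split; last first.
  by split=> //; [rewrite row_fullMl | apply/eqmxP].
split=> [|m2 U' GU'].
  apply: (sub_in_ext hg (is_submod_ker hgh)); first exact: sub_in_eqmx GU (eqmx_sym WkerU).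
  apply: sub_in_eqmx GV _; apply: eqmx_sym; apply: eqmx_trans (kermxM_image _ _) _.
  exact: eqmx_trans (cap_eqmx kerh (eqmx_refl _)) (capmxT _ fullg).
apply: (sub_in_ext hg (is_submod_cap (is_submod_ker hgh) (sub_in_is_submod GU'))).
  apply: sub_in_eqmx (strU _ _ GU') _; apply: eqmx_sym.
  rewrite -capmxA [(U' :&: _)%MS]capmxC capmxA.
  exact: cap_eqmx WkerU (eqmx_refl _).
apply: sub_in_eqmx (strV _ _ (sub_in_mul GU' hg)) _; apply: eqmx_sym.
apply: eqmx_trans (capmx_kermxM _ _ _) _.
exact: cap_eqmx kerh (eqmx_refl _).
Qed.

Lemma strict_quot_ext_split (A B C Q : mod) f g :
  @ses F L A B C f g -> G A -> G C -> strict_quot G B Q ->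
  exists (I Q3 : mod) i p,
    [/\ strict_quot G A I, strict_quot G C Q3 & @ses F L I Q Q3 i p].
Proof.
move=> [hf hg freef fullg /eqmxP kerg] GA GC [m [U [q [strU [hq fullq /eqmxP kerq]]]]].
have hphi := hom_comp hf hq.
pose p := coker_proj (f *m q).
exists (coimage hphi), (cokermod (is_submod_hom hphi)), (coimage_incl hphi), p; split.
- by apply: strict_quot_cokermod; apply: strict_subobj_pullback kerq strU.
- have kerg_qp : (kermx g <= kermx (q *m p))%MS.
    by rewrite -kerg; apply/sub_kermxP; rewrite mulmxA mulmx_coker_proj.
  have ker_qp : (kermx (q *m p) :=: U + f)%MS.
    apply: eqmx_trans (kermxM_full fullq (kermx_coker_proj _)) _.
    exact: adds_eqmx kerq (eqmx_refl _).
  have fg0 : f *m g = 0 by apply/sub_kermxP; rewrite -kerg.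
  exists _, (U *m g), (pinvmx g *m (q *m p)); split.
    apply: strict_subobj_image hg fullg _ strU.
    by exists A, f; split=> //; apply/eqmxP.
  split.
  + exact: hom_factor_epi hg fullg (hom_comp hq (coker_proj_hom _)) kerg_qp.
  + by rewrite -(row_fullMl _ fullg) mulmxKpinv_ker // row_fullMl ?col_base_full.
  + apply/eqmxP; apply: eqmx_trans (kermx_factor_epi fullg (mulmxKpinv_ker fullg kerg_qp)) _.
    apply: eqmx_trans (eqmxMr g ker_qp) _; apply: eqmx_trans (addsmxMr _ _ _) _.
    by rewrite fg0; apply: addsmx0.
- exact: cokermod_ses (coimage_incl_hom hphi) (coimage_incl_free hphi) (coimage_incl_eqmx hphi).
Qed.

Section ClosedUnderStrictQuotients.
Variable X : mod -> Prop.

Definition strict_quots_in (M : mod) : Prop := G M /\ forall Q, strict_quot G M Q -> X Q.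

Lemma strict_quots_in_ext_closed : ext_closed X -> ext_closed strict_quots_in.
Proof.
move=> extX A B C f g s [GA XA] [GC XC]; split; first exact: torsion_ext s GA GC.
move=> Q /(strict_quot_ext_split s GA GC) [I [Q3 [i [p [qAI qCQ3 sQ]]]]].
exact: extX sQ (XA _ qAI) (XC _ qCQ3).
Qed.

Lemma strict_quots_in_quot (M Q : mod) :
  strict_quots_in M -> strict_quot G M Q -> strict_quots_in Q.
Proof.
move=> [GM XM] qMQ; split=> [|Q' qQQ']; last exact: XM _ (strict_quot_trans qMQ qQQ').
by case: qMQ => [m [U [g [_ [hg fullg _]]]]]; apply: torsion_quot hg fullg GM.
Qed.

Lemma strict_quots_in_pseudo_torsion :
  (forall Q, fdim Q = 0%N -> X Q) -> ext_closed X -> pseudo_torsion G strict_quots_in.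
Proof.
move=> X0 extX; split.
- exists zero_mod; split=> [|Q [m [U [g [_ [_ fullg _]]]]]]; first exact: torsion_zero.
  by apply: X0; apply/eqP; rewrite -leqn0 -(eqP fullg) rank_leq_row.
- by move=> M [].
- exact: strict_quots_in_quot.
- by move=> A B C f g [s _ _ _ _]; apply: strict_quots_in_ext_closed s.
Qed.

End ClosedUnderStrictQuotients.

End TorsionClass.

Section Theta.
Variables (R : realType) (theta : mod -> R).
Hypothesis thetaA : additive_fun theta.

Lemma additive_fun_dim0 (Q : mod) : fdim Q = 0%N -> theta Q = 0.
Proof.
(* 0 -> Q -> 0 -> 0 -> 0 is exact. *)
move=> Q0; have s : @ses F L Q zero_mod zero_mod 0 1%:M.
  split; first by move=> a; rewrite mulmx0 mul0mx.
  - by move=> a; rewrite mulmx1 mul1mx.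
  - by rewrite /row_free mxrank0 Q0.
  - by rewrite row_full_unit unitmx1.
  - have /eqP -> : kermx (1%:M : 'M[F]_(fdim zero_mod)) == 0.
      by rewrite kermx_eq0 row_free_unit unitmx1.
    by rewrite !sub0mx.
by apply: (addIr (theta zero_mod)); rewrite add0r -(thetaA s).
Qed.

Lemma ext_closed_theta_pos : ext_closed (fun Q => (0 < fdim Q)%N -> 0 < theta Q).
Proof.
have ge0 M : ((0 < fdim M)%N -> 0 < theta M) -> 0 <= theta M.
  by case: (posnP (fdim M)) => [/additive_fun_dim0 -> | _ /(_ isT) /ltW].
move=> A B C f g s XA XC; rewrite (ses_fdim s) (thetaA s) addn_gt0.
case/orP=> [/XA | /XC] pos; [exact: ltr_pwDl (ge0 _ XC) | exact: ltr_pwDr (ge0 _ XA)].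
Qed.

Lemma ext_closed_theta_ge0 : ext_closed (fun Q => 0 <= theta Q).
Proof. by move=> A B C f g s XA XC; rewrite (thetaA s) addr_ge0. Qed.

End Theta.

End Modules.

Theorem mainTheorem11 (F : fieldType) (L : falgType F) (G : fmod L -> Prop)
  (R : realType) (theta : fmod L -> R) :
  torsion_class G -> additive_fun theta ->
  [/\ pseudo_torsion G (Pth G theta), pseudo_torsion G (Pbar G theta),
      ext_closed (Pth G theta) & ext_closed (Pbar G theta)] /\
  (dsum_closed (Pth G theta) /\ dsum_closed (Pbar G theta)).
Proof.
move=> tG thetaA.
pose Xpos (Q : fmod L) := (0 < fdim Q)%N -> 0 < theta Q.
pose Xge0 (Q : fmod L) := 0 <= theta Q.
have pos0 Q : fdim Q = 0%N -> Xpos Q by rewrite /Xpos => ->.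
have ge0 Q : fdim Q = 0%N -> Xge0 Q by rewrite /Xge0 => /(additive_fun_dim0 thetaA) ->.
have extpos : ext_closed Xpos := ext_closed_theta_pos thetaA.
have extge0 : ext_closed Xge0 := ext_closed_theta_ge0 thetaA.
have extPth := strict_quots_in_ext_closed tG extpos.
have extPbar := strict_quots_in_ext_closed tG extge0.
split; first split.
- exact: (strict_quots_in_pseudo_torsion tG pos0 extpos).
- exact: (strict_quots_in_pseudo_torsion tG ge0 extge0).
- exact: extPth.
- exact: extPbar.
by split; apply: ext_closed_dsum_closed.
Qed.
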